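(* Let $\mathcal{A}$ be an Ershov $\mathcal{C}$-algebra. Then $\mathcal{A}$ is weakly equationally Noetherian if and only if both of the following hold: \begin{enumerate} \item every subset of $\mathcal{C}$ that is bounded above in $\mathcal{A}$ has a supremum in $\mathcal{A}$, and this supremum belongs to $\mathcal{C}$; \item for every set $\{c_j \mid j\in J\} \subseteq \mathcal{C}$ that is not bounded above there exists $c \in \mathcal{C}$ such that the system $\{x \wedge c_j = 0 \mid j \in J\}$ in one variable $x$ is equivalent over $\mathcal{A}$ to the equation $x \leq c$. \end{enumerate}
   Context: An Ershov algebra is a structure $\langle A; \vee, \wedge, \setminus, 0\rangle$ such that $\langle A;\vee,\wedge\rangle$ is a distributive lattice with least element $0$, and $b \setminus a$ is the relative complement: the unique $z$ with $z \wedge a = 0$ and $z \vee a = a \vee b$. An Ershov $\mathcal{C}$-algebra is an Ershov algebra $\mathcal{A}$ together with a distinguished subalgebra $\mathcal{C}$ whose elements are added as constant symbols; $\mathcal{L}$ is the language $\{\vee,\wedge,\setminus,0\}$ plus these constants. An equation is $t(\bar x)=s(\bar x)$ with $t,s$ terms of $\mathcal{L}$; $t\le s$ means the equation $t\vee s=s$. Two systems of equations are equivalent over $\mathcal{A}$ if they have the same solution set. $\mathcal{A}$ is weakly equationally Noetherian if every system of equations (possibly infinite) in finitely many variables is equivalent over $\mathcal{A}$ to some finite system of equations of $\mathcal{L}$. ''Not bounded above'' means having no upper bound in $\mathcal{A}$. *)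

(* An Ershov algebra <A; \/, /\, \, 0> is exactly a
   sectionally complemented distributive lattice with bottom
   ([cbDistrLatticeType d] in mathcomp's order library): join `|`,
   meet `&`, bottom \bot (= 0), relative complement `\`. *)
From Stdlib Require Import List.
From mathcomp Require Import all_boot all_order.
Set Implicit Arguments. Unset Strict Implicit. Unset Printing Implicit Defensive.
Import Order.Theory.
Local Open Scope order_scope.

Section Ershov.
Variables (d : Order.disp_t) (A : cbDistrLatticeType d).

Definition subalgebra (C : A -> Prop) : Prop :=
  [/\ C \bot,
      (forall x y, C x -> C y -> C (x `|` y)),
      (forall x y, C x -> C y -> C (x `&` y)) &
      (forall x y, C x -> C y -> C (x `\` y))].

Inductive term (C : A -> Prop) (n : nat) : Type :=
  | Tvar of 'I_n
  | Tconst of {c : A | C c}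
  | Tzero
  | Tjoin of term C n & term C n
  | Tmeet of term C n & term C n
  | Tdiff of term C n & term C n.

Fixpoint eval (C : A -> Prop) (n : nat) (v : 'I_n -> A) (t : term C n) : A :=
  match t with
  | Tvar i => v i
  | Tconst c => proj1_sig c
  | Tzero => \bot
  | Tjoin t1 t2 => eval v t1 `|` eval v t2
  | Tmeet t1 t2 => eval v t1 `&` eval v t2
  | Tdiff t1 t2 => eval v t1 `\` eval v t2
  end.

Definition equation (C : A -> Prop) (n : nat) : Type := (term C n * term C n)%type.

Definition solves (C : A -> Prop) (n : nat) (v : 'I_n -> A)
    (S : equation C n -> Prop) : Prop :=
  forall e, S e -> eval v e.1 = eval v e.2.

Definition equivalent (C : A -> Prop) (n : nat)
    (S1 S2 : equation C n -> Prop) : Prop :=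
  forall v : 'I_n -> A, solves v S1 <-> solves v S2.

Definition weakly_eq_noetherian (C : A -> Prop) : Prop :=
  forall (n : nat) (S : equation C n -> Prop),
  exists S0 : seq (equation C n),
    equivalent S (fun e => In e S0).

Definition upper_bound (S : A -> Prop) (u : A) : Prop :=
  forall s, S s -> s <= u.

Definition bounded_above (S : A -> Prop) : Prop := exists u, upper_bound S u.

Definition is_supremum (S : A -> Prop) (u : A) : Prop :=
  upper_bound S u /\ (forall w, upper_bound S w -> u <= w).

End Ershov.

(* A one-variable term [r] has the normal form
     r(x) = (x /\ q) \/ (x \ K, if e) \/ (r(0) \ x),
   where K is the join of the constants of r, q = r(K) /\ K, and e is the value
   of r in the two-element algebra with the variable set to 1 and constants to 0.
   Hence r(x) = 0 iff r(0) <= x, x /\ q = 0 and (e -> x <= K).  A finite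
   system is equivalent to one equation r = 0.
   If A is weakly equationally Noetherian, the systems {s \/ x = x | s in S}
   and {x /\ s = 0 | s in S} give, for bounded S, the supremum r(0), and, for
   unbounded S, the generator K \ q (e = 0 is impossible, as then K would bound
   S); both lie in C.
   Conversely, conditions 1 and 2 make the sets of upper bounds, of lower
   bounds and of elements disjoint from a subset of C finitely definable, hence
   by the normal form every one-variable system.  Systems in n variables
   reduce to one variable: below the join J of the variables, A splits into the
   2^n cells of the Boolean algebra generated by the variables, on each of which
   (and outside J) a term in n variables acts as a term in one variable. *)

From Stdlib Require Import List Classical.
From mathcomp Require Import all_boot all_order.
Set Implicit Arguments. Unset Strict Implicit. Unset Printing Implicit Defensive.
Import Order.Theory.
Local Open Scope order_scope.

Section CBDistrLatticeFacts.
Context {disp : Order.disp_t} {L : cbDistrLatticeType disp}.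
Implicit Types x y z : L.

Lemma meetI_dist x y z : (x `&` y) `&` z = (x `&` z) `&` (y `&` z).
Proof. by rewrite meetACA meetxx. Qed.

Lemma meetB_dist x y z : (x `\` y) `&` z = (x `&` z) `\` (y `&` z).
Proof. by rewrite meetBx diffxI [X in _ `|` X]diffIx diffxx meetx0 joinx0. Qed.

Lemma diffB_dist x y z : (x `\` y) `\` z = (x `\` z) `\` (y `\` z).
Proof. by rewrite !diffBx diffKU joinC. Qed.

End CBDistrLatticeFacts.

Section Terms.
Variables (d : Order.disp_t) (A : cbDistrLatticeType d) (C : A -> Prop).
Implicit Types (x y : A).

Notation x0 := (Tvar C (@ord0 0)).

Definition cst n c (Cc : C c) : term C n := Tconst n (exist C c Cc).

Definition pt x : 'I_1 -> A := fun _ => x.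

Lemma eq_eval n (v w : 'I_n -> A) (t : term C n) : v =1 w -> eval v t = eval w t.
Proof. by move=> vw; elim: t => //= [t1 -> t2 ->|t1 -> t2 ->|t1 -> t2 ->]. Qed.

Lemma eval_ord1 (u : 'I_1 -> A) (t : term C 1) : eval u t = eval (pt (u ord0)) t.
Proof. by apply: eq_eval => i; rewrite (ord1 i). Qed.

Fixpoint subst n m (s : 'I_n -> term C m) (t : term C n) : term C m :=
  match t with
  | Tvar i => s i
  | Tconst c => Tconst m c
  | Tzero => Tzero C m
  | Tjoin t1 t2 => Tjoin (subst s t1) (subst s t2)
  | Tmeet t1 t2 => Tmeet (subst s t1) (subst s t2)
  | Tdiff t1 t2 => Tdiff (subst s t1) (subst s t2)
  end.

Lemma eval_subst n m (s : 'I_n -> term C m) (v : 'I_m -> A) (t : term C n) :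
  eval v (subst s t) = eval (fun i => eval v (s i)) t.
Proof. by elim: t => //= [t1 -> t2 ->|t1 -> t2 ->|t1 -> t2 ->]. Qed.

(* Meeting with, or subtracting, a fixed element is an endomorphism of the
   algebra fixing every element below it, resp. disjoint from it. *)
Lemma meet_eval n (v : 'I_n -> A) (t : term C n) y :
  eval v t `&` y = eval (fun i => v i `&` y) t `&` y.
Proof.
elim: t => //= [i|t1 IH1 t2 IH2|t1 IH1 t2 IH2|t1 IH1 t2 IH2].
- by rewrite -meetA meetxx.
- by rewrite !meetUl IH1 IH2.
- by rewrite meetI_dist IH1 IH2 -meetI_dist.
- by rewrite meetB_dist IH1 IH2 -meetB_dist.
Qed.

Lemma diff_eval n (v : 'I_n -> A) (t : term C n) y :
  eval v t `\` y = eval (fun i => v i `\` y) t `\` y.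
Proof.
elim: t => //= [i|t1 IH1 t2 IH2|t1 IH1 t2 IH2|t1 IH1 t2 IH2].
- by rewrite diffBx joinxx.
- by rewrite !diffUx IH1 IH2.
- by rewrite !diffIx IH1 IH2.
- by rewrite diffB_dist IH1 IH2 -diffB_dist.
Qed.

Lemma diff_eval_self (r : term C 1) x :
  eval (pt x) r `\` x = eval (pt \bot) r `\` x.
Proof. by rewrite [LHS]diff_eval; congr (_ `\` _); apply: eq_eval => i; exact: diffxx. Qed.

Fixpoint const_join n (t : term C n) : A :=
  match t with
  | Tconst c => proj1_sig c
  | Tjoin t1 t2 | Tmeet t1 t2 | Tdiff t1 t2 => const_join t1 `|` const_join t2
  | _ => \bot
  end.

Fixpoint eval_bool n (t : term C n) : bool :=
  match t with
  | Tvar _ => true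
  | Tjoin t1 t2 => eval_bool t1 || eval_bool t2
  | Tmeet t1 t2 => eval_bool t1 && eval_bool t2
  | Tdiff t1 t2 => eval_bool t1 && ~~ eval_bool t2
  | _ => false
  end.

Lemma diff_eval_const_join n (t : term C n) x K : const_join t <= K ->
  eval (fun _ => x) t `\` K = if eval_bool t then x `\` K else \bot.
Proof.
elim: t => /= [_|[c Cc]||t1 IH1 t2 IH2|t1 IH1 t2 IH2|t1 IH1 t2 IH2] //.
- by move=> cK; apply/eqP; rewrite diff_eq0.
- by rewrite diff0x.
- rewrite leUx diffUx => /andP[/IH1-> /IH2->].
  by case: (eval_bool t1); case: (eval_bool t2); rewrite ?joinxx ?joinx0 ?join0x.
- rewrite leUx diffIx => /andP[/IH1-> /IH2->].
  by case: (eval_bool t1); case: (eval_bool t2); rewrite ?meetxx ?meetx0 ?meet0x.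
- rewrite leUx diffB_dist => /andP[/IH1-> /IH2->].
  by case: (eval_bool t1); case: (eval_bool t2); rewrite ?diffxx ?diffx0 ?diff0x.
Qed.

Definition forbidden (r : term C 1) : A :=
  eval (pt (const_join r)) r `&` const_join r.

Lemma eval_pt_normal_form (r : term C 1) x :
  eval (pt x) r = (x `&` forbidden r)
                  `|` (if eval_bool r then x `\` const_join r else \bot)
                  `|` (eval (pt \bot) r `\` x).
Proof.
set K := const_join r.
have below_K : (eval (pt x) r `&` x) `&` K = x `&` forbidden r.
  rewrite /forbidden -/K -meetA meet_eval [RHS]meetCA [RHS]meet_eval /pt.
  by rewrite meetKI [K `&` _]meetCA meetxx.
have outside_K : (eval (pt x) r `&` x) `\` K = if eval_bool r then x `\` K else \bot.
  rewrite -meetBx (diff_eval_const_join x (lexx K)).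
  by case: eval_bool; rewrite ?meet0x // meet_l ?leBx.
by rewrite -[LHS](joinIB x) diff_eval_self -(joinIB K (_ `&` x)) below_K outside_K.
Qed.

Lemma eval_pt_eq0 (r : term C 1) x :
  (eval (pt x) r == \bot) =
  [&& eval (pt \bot) r <= x, x `&` forbidden r == \bot
    & eval_bool r ==> (x <= const_join r)].
Proof.
rewrite eval_pt_normal_form !join_eq0 diff_eq0 andbC.
by case: (eval_bool r); rewrite ?diff_eq0 ?eqxx ?andbT.
Qed.

Definition bounded_sup_in :=
  forall S : A -> Prop, (forall s, S s -> C s) -> bounded_above S ->
  exists u, is_supremum S u /\ C u.

Definition unbounded_ann_principal :=
  forall S : A -> Prop, (forall s, S s -> C s) -> ~ bounded_above S ->
  exists c, C c /\ (forall x, (forall s, S s -> x `&` s = \bot) <-> x `|` c = c).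

Hypothesis HC : subalgebra C.

Lemma eval_C n (v : 'I_n -> A) (t : term C n) : (forall i, C (v i)) -> C (eval v t).
Proof.
case: HC => C0 CU CI CB Cv.
by elim: t => //= [[c Cc]|t1 ? t2 ?|t1 ? t2 ?|t1 ? t2 ?]; auto.
Qed.

Lemma const_join_C n (t : term C n) : C (const_join t).
Proof.
case: HC => C0 CU CI CB.
by elim: t => //= [[c Cc]|t1 ? t2 ?|t1 ? t2 ?|t1 ? t2 ?]; auto.
Qed.

Lemma forbidden_C (r : term C 1) : C (forbidden r).
Proof. by case: HC => _ _ CI _; apply/CI/const_join_C/eval_C => i; exact: const_join_C. Qed.

Definition eq_term n (e : equation C n) : term C n :=
  Tjoin (Tdiff e.1 e.2) (Tdiff e.2 e.1).

Lemma eval_eq_term_eq0 n (v : 'I_n -> A) (e : equation C n) :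
  (eval v (eq_term e) == \bot) = (eval v e.1 == eval v e.2).
Proof. by rewrite /= join_eq0 !diff_eq0 eq_le. Qed.

Definition sys_term n (F : seq (equation C n)) : term C n :=
  foldr (fun e t => Tjoin (eq_term e) t) (Tzero C n) F.

Lemma sys_termP n (v : 'I_n -> A) (F : seq (equation C n)) :
  eval v (sys_term F) == \bot <-> solves v (fun e => In e F).
Proof.
elim: F => [|e F IH]; first by split=> // _ e [].
have -> : eval v (sys_term (e :: F)) = eval v (eq_term e) `|` eval v (sys_term F) by [].
rewrite join_eq0 eval_eq_term_eq0.
split=> [/andP[/eqP eqe /IH solF] e' [<-|/solF]|sol] //.
apply/andP; split; first by apply/eqP/sol; left.
by apply/IH => e' Fe'; apply: sol; right.
Qed.

Lemma wen_root_term (S : equation C 1 -> Prop) : weakly_eq_noetherian C ->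
  exists r : term C 1, forall x, solves (pt x) S <-> eval (pt x) r == \bot.
Proof.
move=> /(_ 1 S)[F SF]; exists (sys_term F) => x.
by rewrite sys_termP; exact: SF.
Qed.

(* A one-variable term with a root has its value at [\bot] as least root. *)
Lemma wen_bounded_sup : weakly_eq_noetherian C -> bounded_sup_in.
Proof.
move=> W S SC [u ub_u].
pose sys e := exists s (Ss : S s), e = (Tjoin (cst 1 (SC s Ss)) x0, x0).
have [r rP] : exists r : term C 1, forall x, upper_bound S x <-> eval (pt x) r == \bot.
  have [r rP] := wen_root_term sys W; exists r => x; rewrite -rP.
  split=> [ub _ [s [Ss ->]]|sol s Ss]; first exact/join_idPr/ub.
  exact/join_idPr/(sol _ (ex_intro _ s (ex_intro _ Ss erefl))).
have /rP := ub_u; rewrite eval_pt_eq0 => /and3P[le_bu dis_u le_uK].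
exists (eval (pt \bot) r); split; last by apply: eval_C => i; have [] := HC.
split=> [|w /rP]; last by rewrite eval_pt_eq0 => /and3P[].
apply/rP; rewrite eval_pt_eq0 lexx /= -lex0; apply/andP; split.
  by rewrite (le_trans (leI2 le_bu (lexx _))) ?lex0.
by apply/implyP => /(implyP le_uK); exact: le_trans.
Qed.

(* If [eval_bool r] were false, [s `\` K] would be a root for every [s] in [S],
   forcing [s <= K]. *)
Lemma wen_unbounded_ann : weakly_eq_noetherian C -> unbounded_ann_principal.
Proof.
move=> W S SC unbS.
pose sys e := exists s (Ss : S s), e = (Tmeet x0 (cst 1 (SC s Ss)), Tzero C 1).
have [r rP] : exists r : term C 1, forall x,
    (forall s, S s -> x `&` s = \bot) <-> eval (pt x) r == \bot.
  have [r rP] := wen_root_term sys W; exists r => x; rewrite -rP.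
  split=> [ann _ [s [Ss ->]]|sol s Ss]; first exact: ann.
  exact: (sol _ (ex_intro _ s (ex_intro _ Ss erefl))).
set K := const_join r.
have r0 : eval (pt \bot) r == \bot by apply/rP => s _; rewrite meet0x.
have {}rP x : (forall s, S s -> x `&` s = \bot) <->
              (x `&` forbidden r == \bot) && (eval_bool r ==> (x <= K)).
  by rewrite rP eval_pt_eq0 (eqP r0) le0x.
have var_r : eval_bool r.
  apply: contra_notT unbS => /negbTE novar; exists K => s Ss.
  have /(_ s Ss) : forall s', S s' -> (s `\` K) `&` s' = \bot.
    by apply/rP; rewrite novar andbT -lex0 -(diffIK s K) leI2 ?leIr.
  by rewrite meet_l ?leBx // => /eqP; rewrite diff_eq0.
exists (K `\` forbidden r); split.
  by case: HC => _ _ _ CB; apply: CB; [exact: const_join_C | exact: forbidden_C].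
by move=> x; rewrite rP var_r /= andbC -leBRL; split => /join_idPr.
Qed.

Definition fin_definable n (P : ('I_n -> A) -> Prop) :=
  exists F : seq (equation C n), forall v, P v <-> solves v (fun e => In e F).

Lemma solves1 n (v : 'I_n -> A) (e : equation C n) :
  solves v (fun e' => In e' [:: e]) <-> eval v e.1 = eval v e.2.
Proof. by split=> [/(_ e (or_introl erefl))|eq_e _ [<-|[]]]. Qed.

Lemma eq_fin_definable n (P Q : ('I_n -> A) -> Prop) :
  (forall v, P v <-> Q v) -> fin_definable P -> fin_definable Q.
Proof. by move=> PQ [F PF]; exists F => v; rewrite -PQ. Qed.

Lemma fin_definableI n (P Q : ('I_n -> A) -> Prop) :
  fin_definable P -> fin_definable Q -> fin_definable (fun v => P v /\ Q v).
Proof.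
move=> [F PF] [G QG]; exists (F ++ G)%list => v; rewrite PF QG.
split=> [[solF solG] e /in_app_iff[/solF|/solG]|sol] //.
by split=> e Fe; apply: sol; apply/in_app_iff; [left|right].
Qed.

Lemma fin_definable_forall n (I : finType) (P : I -> ('I_n -> A) -> Prop) :
  (forall i, fin_definable (P i)) -> fin_definable (fun v => forall i, P i v).
Proof.
move=> defP; pose Q (l : seq I) v := forall i, i \in l -> P i v.
apply: (@eq_fin_definable _ (Q (enum I))) => [v|].
  by split=> [Pv i|Pv i _]; [apply: Pv; rewrite mem_enum | exact: Pv].
elim: (enum I) => [|i l IH]; first by exists [::] => v; split=> // _ e [].
apply: eq_fin_definable (fin_definableI (defP i) IH) => v.
split=> [[Pi Pl] j|Pv]; first by rewrite in_cons => /predU1P[->|/Pl].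
by split=> [|j lj]; apply: Pv; rewrite in_cons ?eqxx ?lj ?orbT.
Qed.

Lemma fin_definable_comp n m (s : 'I_m -> term C n) (P : ('I_m -> A) -> Prop) :
  fin_definable P -> fin_definable (fun v => P (fun i => eval v (s i))).
Proof.
move=> [F PF].
exists (map (fun e => (subst s e.1, subst s e.2)) F) => v; rewrite PF.
split=> [sol _ /in_map_iff[e [<- Fe]]|sol e Fe] /=; rewrite ?eval_subst.
  exact: sol.
by have := sol _ (in_map _ _ _ Fe); rewrite /= !eval_subst.
Qed.

Section Cells.
Variable n : nat.
Implicit Types (v : 'I_n -> A) (b : {ffun 'I_n -> bool}) (r : term C n).

Definition join_all : term C n :=
  foldr (fun i t => Tjoin (Tvar C i) t) (Tzero C n) (enum 'I_n).

Definition literal b i : term C n :=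
  if b i then Tdiff join_all (Tvar C i) else Tvar C i.

(* [cell b l] is the part of [join_all] lying inside [x_i] for [b i] and
   outside it otherwise, for all [i] in [l]. *)
Fixpoint cell b (l : seq 'I_n) : term C n :=
  if l is i :: l then Tdiff (cell b l) (literal b i) else join_all.

Notation cell_all b := (cell b (enum 'I_n)).

Lemma var_le_join_all v i : v i <= eval v join_all.
Proof.
have : i \in enum 'I_n by rewrite mem_enum.
rewrite /join_all; elim: (enum 'I_n) => //= j l IH.
by rewrite in_cons => /predU1P[->|/IH/le_trans]; [exact: leUl | apply; exact: leUr].
Qed.

Lemma cell_le_join_all v b l : eval v (cell b l) <= eval v join_all.
Proof. by elim: l => //= i l /(le_trans _); apply; exact: leBx. Qed.

Lemma cell_literal_eq0 v b l i : i \in l ->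
  eval v (cell b l) `&` eval v (literal b i) = \bot.
Proof.
elim: l => //= j l IH; rewrite in_cons => /predU1P[->|/IH c_i]; first exact: diffIK.
by apply/eqP; rewrite -lex0 -c_i leI2 ?leBx.
Qed.

Lemma eq_cell b b' l : {in l, b =1 b'} -> cell b l = cell b' l.
Proof.
elim: l => //= i l IH eq_b; rewrite /literal eq_b ?mem_head // IH // => j lj.
by apply: eq_b; rewrite in_cons lj orbT.
Qed.

Lemma meet_var_cell v b i :
  v i `&` eval v (cell_all b) = if b i then eval v (cell_all b) else \bot.
Proof.
have := cell_literal_eq0 v b (mem_enum 'I_n i); rewrite /literal.
case: (b i) => /= dis; last by rewrite meetC.
apply/meet_idPr/(@le_trans _ _ (eval v join_all `\` (eval v join_all `\` v i))).
  by rewrite leBRL cell_le_join_all dis eqxx.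
by rewrite diffxB diffxx join0x leIr.
Qed.

(* Splitting each cell of [l] along [x_i] gives the cells of [i :: l]. *)
Lemma cells_cover v z : z <= eval v join_all ->
  (forall b, z `&` eval v (cell_all b) = \bot) -> z = \bot.
Proof.
move=> z_le; have : uniq (enum 'I_n) := enum_uniq _.
elim: (enum 'I_n) => [_ /(_ [ffun=> false])|i l IH /andP[il ul] z_cells].
  by rewrite /= meet_l.
apply: IH => // b; set c := eval v (cell b l).
pose bi (bit : bool) := [ffun j => if j == i then bit else b j].
have cell_bi bit : cell (bi bit) l = cell b l.
  by apply: eq_cell => j jl; rewrite ffunE; case: eqP => // ji; rewrite -ji jl in il.
have := z_cells (bi false); have := z_cells (bi true).
rewrite /= !cell_bi /literal !ffunE eqxx /= -/c.
rewrite diffxB (eqP (_ : c `\` _ == \bot)) ?diff_eq0 ?cell_le_join_all // join0x.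
move=> zc_i zc_ni.
by rewrite -(joinIB (v i) (z `&` c)) -meetA zc_i -meetxB zc_ni joinxx.
Qed.

Definition outer_term r : term C 1 := Tdiff (subst (fun=> Tzero C 1) r) x0.

Definition cell_term b r : term C 1 :=
  Tmeet (subst (fun i => if b i then x0 else Tzero C 1) r) x0.

Lemma eval_outer_term v r :
  eval (pt (eval v join_all)) (outer_term r) = eval v r `\` eval v join_all.
Proof.
rewrite /= eval_subst [RHS]diff_eval; congr (_ `\` _); apply: eq_eval => i /=.
by apply/esym/eqP; rewrite diff_eq0 var_le_join_all.
Qed.

Lemma eval_cell_term v b r :
  eval (pt (eval v (cell_all b))) (cell_term b r) = eval v r `&` eval v (cell_all b).
Proof.
rewrite /= eval_subst [RHS]meet_eval; congr (_ `&` _); apply: eq_eval => i /=.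
by rewrite meet_var_cell; case: (b i).
Qed.

Lemma eval_eq0_cells v r : eval v r == \bot <->
  eval (pt (eval v join_all)) (outer_term r) == \bot /\
  forall b, eval (pt (eval v (cell_all b))) (cell_term b r) == \bot.
Proof.
rewrite eval_outer_term; split=> [/eqP r0|[/eqP out0 cells0]].
  by rewrite r0 diff0x; split=> // b; rewrite eval_cell_term r0 meet0x.
rewrite -(joinIB (eval v join_all) (eval v r)) out0 joinx0.
apply/eqP/cells_cover => [|b]; first exact: leIr.
rewrite -meetA (meet_idPr (cell_le_join_all _ _ _)) -eval_cell_term.
exact/eqP.
Qed.

End Cells.

Section Backward.
Hypothesis sup_C : bounded_sup_in.
Hypothesis ann_C : unbounded_ann_principal.

Lemma upper_bounds_definable (P : A -> Prop) : (forall p, P p -> C p) ->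
  fin_definable (fun u : 'I_1 -> A => upper_bound P (u ord0)).
Proof.
move=> PC; have [bndP|unbP] := classic (bounded_above P).
  have [s [[ub_s least_s] Cs]] := sup_C PC bndP.
  exists [:: (Tjoin (cst 1 Cs) x0, x0)] => u; rewrite solves1 /=.
  split=> [/least_s/join_idPr //|/join_idPr le_su p Pp].
  exact: le_trans (ub_s p Pp) le_su.
have [p Pp p0] : exists2 p, P p & p != \bot.
  apply: NNPP => nz; apply: unbP; exists \bot => p Pp; rewrite lex0.
  by apply: contra_notT nz => p0; exists p.
exists [:: (cst 1 (PC p Pp), Tzero C 1)] => u; rewrite solves1 /=.
split=> [ub_u|p_eq0]; last by rewrite p_eq0 eqxx in p0.
by case: unbP; exists (u ord0).
Qed.

Lemma annihilator_definable (P : A -> Prop) : (forall p, P p -> C p) ->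
  fin_definable (fun u : 'I_1 -> A => forall p, P p -> u ord0 `&` p = \bot).
Proof.
move=> PC; have [bndP|unbP] := classic (bounded_above P); last first.
  have [c [Cc ann_c]] := ann_C PC unbP.
  by exists [:: (Tjoin x0 (cst 1 Cc), cst 1 Cc)] => u; rewrite solves1 ann_c.
have [s [[ub_s least_s] Cs]] := sup_C PC bndP.
exists [:: (Tmeet x0 (cst 1 Cs), Tzero C 1)] => u; rewrite solves1 /=.
split=> [ann|us0 p Pp].
  have : s <= s `\` u ord0.
    by apply: least_s => p Pp; rewrite leBRL ub_s //= meetC (ann p Pp).
  by rewrite leBRL lexx meetC => /eqP.
by apply/eqP; rewrite -lex0 -us0 leI2 ?ub_s.
Qed.

Lemma lower_bounds_definable (P : A -> Prop) : (forall p, P p -> C p) ->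
  fin_definable (fun u : 'I_1 -> A => forall p, P p -> u ord0 <= p).
Proof.
move=> PC; have [[p0 Pp0]|emptyP] := classic (exists p, P p); last first.
  by exists [::] => u; split=> [_ e []|_ p Pp]; case: emptyP; exists p.
(* Below [p0], lying below [p] means being disjoint from [p0 `\` p]. *)
pose D z := exists2 p, P p & z = p0 `\` p.
have DC z : D z -> C z.
  by case=> p Pp ->; case: HC => _ _ _ CB; apply: CB; exact: PC.
have le_p0 : fin_definable (fun u : 'I_1 -> A => u ord0 <= p0).
  exists [:: (Tjoin x0 (cst 1 (PC p0 Pp0)), cst 1 (PC p0 Pp0))] => u.
  by rewrite solves1 /=; split=> /join_idPr.
apply: eq_fin_definable (fin_definableI le_p0 (annihilator_definable DC)) => u /=.
split=> [[le_up0 ann] p Pp|lb]; last first.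
  split=> [|z [p Pp ->]]; first exact: lb.
  by apply/eqP; rewrite -lex0 -(diffKI p0 p) leI2 ?lb.
have /eqP := ann _ (ex_intro2 _ _ p Pp erefl).
rewrite (meet_eq0E_diff _ le_up0) diffxB diffxx join0x => /le_trans; apply.
exact: leIr.
Qed.

Lemma root_set_definable (R : term C 1 -> Prop) :
  fin_definable (fun u : 'I_1 -> A => forall r, R r -> eval u r == \bot).
Proof.
pose B b := exists2 r, R r & b = eval (pt \bot) r.
pose Q q := exists2 r, R r & q = forbidden r.
pose K k := exists r, [/\ R r, eval_bool r & k = const_join r].
have BC b : B b -> C b by case=> r _ ->; apply: eval_C => i; have [] := HC.
have QC q : Q q -> C q by case=> r _ ->; exact: forbidden_C.
have KC k : K k -> C k by case=> r [_ _ ->]; exact: const_join_C.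
apply: eq_fin_definable (fin_definableI (upper_bounds_definable BC)
  (fin_definableI (annihilator_definable QC) (lower_bounds_definable KC))) => u.
split=> [[ub [ann lb]] r Rr|roots].
  rewrite eval_ord1 eval_pt_eq0; apply/and3P; split.
  - by apply: ub; exists r.
  - by apply/eqP/ann; exists r.
  - by apply/implyP => var_r; apply: lb; exists r.
have rootP r : R r -> [&& eval (pt \bot) r <= u ord0, u ord0 `&` forbidden r == \bot
                        & eval_bool r ==> (u ord0 <= const_join r)].
  by move=> Rr; rewrite -eval_pt_eq0 -eval_ord1; exact: roots.
split=> [b [r /rootP/and3P[le_bu _ _] ->] //|].
split=> [q [r /rootP/and3P[_ /eqP dis_uq _] ->] //|].
by move=> k [r [/rootP/and3P[_ _ /implyP le_uK] /le_uK le_uk ->]].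
Qed.

Lemma sup_ann_wen : weakly_eq_noetherian C.
Proof.
move=> n S.
pose R_out r := exists2 e, S e & r = outer_term (eq_term e).
pose R_cell b r := exists2 e, S e & r = cell_term b (eq_term e).
have [F FP] := fin_definableI
  (fin_definable_comp (fun=> join_all n) (root_set_definable R_out))
  (fin_definable_forall (fun b =>
     fin_definable_comp (fun=> cell b (enum 'I_n)) (root_set_definable (R_cell b)))).
exists F => v; rewrite -FP.
have eq_termP e : eval v e.1 = eval v e.2 <-> eval v (eq_term e) == \bot.
  by rewrite eval_eq_term_eq0; split=> /eqP.
split=> [sol|[outer0 cells0] e Se].
  split=> [_ [e Se ->]|b _ [e Se ->]];
    have /eq_termP/eval_eq0_cells[outer0 cells0] := sol e Se; [exact: outer0 | exact: cells0].
apply/eq_termP/eval_eq0_cells => //; split=> [|b].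
  by apply: outer0; exists e.
by apply: cells0; exists e.
Qed.

End Backward.

End Terms.

Theorem mainTheorem8 (d : Order.disp_t) (A : cbDistrLatticeType d)
    (C : A -> Prop) (HC : subalgebra C) :
  weakly_eq_noetherian C <->
  ((forall S : A -> Prop, (forall s, S s -> C s) -> bounded_above S ->
      exists u, is_supremum S u /\ C u) /\
   (forall S : A -> Prop, (forall s, S s -> C s) -> ~ bounded_above S ->
      exists c, C c /\
        (forall x : A, (forall s, S s -> x `&` s = \bot) <-> x `|` c = c))).
Proof.
split=> [W|[sup_C ann_C]].
  by split; [exact: wen_bounded_sup | exact: wen_unbounded_ann].
exact: sup_ann_wen.
Qed.
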